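(* Let $n,k\in\mathbb{N}$. A class of finite graphs all of which have $n$-depth tree-width at most $k$ is $\mathrm{MSO}_2$-orderable if, and only if, it is finite (up to isomorphism). Consequently, the class of all finite graphs of $n$-depth tree-width at most $k$ is hereditarily $\mathrm{MSO}_2$-unorderable.
   Context: Graphs are finite, simple, undirected. A graph has $n$-depth tree-width at most $k$ if it has a tree decomposition of width at most $k$ (all bags of size at most $k+1$) whose index tree is rooted and has height at most $n$. For $G=\langle V,E\rangle$, $\lceil G\rceil=\langle V\cup E,\mathrm{inc}\rangle$ (universe $V\cup E$, incidence relation). An MSO-formula $\varphi(x,y;Z_0,\dots,Z_{m-1})$ defines an order on a class $\mathcal{C}$ of structures if for every non-empty $\mathfrak{A}\in\mathcal{C}$ there are $P_0,\dots,P_{m-1}\subseteq A$ with $\{(a,b):\mathfrak{A}\models\varphi(a,b;\bar P)\}$ a linear order on $A$; a graph class is $\mathrm{MSO}_2$-orderable if some MSO-formula defines an order on $\{\lceil G\rceil\}$. A class is hereditarily $\mathrm{MSO}_2$-unorderable if it is infinite (up to isomorphism) and no infinite subclass is $\mathrm{MSO}_2$-orderable. *)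

From mathcomp Require Import all_boot.
Set Implicit Arguments. Unset Strict Implicit. Unset Printing Implicit Defensive.

Record graph := Graph {
  gn : nat;
  gadj : rel 'I_gn;
  gadj_irr : irreflexive gadj;
  gadj_sym : symmetric gadj }.

Definition graph_iso (G H : graph) : Prop :=
  exists f : 'I_(gn G) -> 'I_(gn H),
    bijective f /\ forall u v, @gadj H (f u) (f v) = @gadj G u v.

Definition finite_up_to_iso (C : graph -> Prop) : Prop :=
  exists (N : nat) (L : 'I_N -> graph), forall G, C G -> exists i, graph_iso G (L i).

(* A rooted tree on nodes 'I_m with root r is given by a parent map [par]
   with [par r = r]; the requirement that every node reaches the root in
   d parent steps ([iter d par t = r]) says it is a tree of height <= d. *)
Definition tree_adj m (par : 'I_m -> 'I_m) : rel 'I_m :=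
  fun a b => (a != b) && ((par a == b) || (par b == a)).

Definition depth_tw_le (d k : nat) (G : graph) : Prop :=
  exists (m : nat) (par : 'I_m -> 'I_m) (r : 'I_m) (B : 'I_m -> {set 'I_(gn G)}),
    [/\ par r = r,
        (forall t, iter d par t = r),
        (forall v, exists t, v \in B t) &
      [/\ (forall u v, @gadj G u v -> exists t, (u \in B t) && (v \in B t)),
        (forall v t1 t2, v \in B t1 -> v \in B t2 ->
           connect [rel a b | [&& tree_adj par a b, v \in B a & v \in B b]] t1 t2)
      & (forall t, #|B t| <= k.+1)]].

(** * The incidence structure [G] = <V u E, inc> *)
Definition is_edge (G : graph) (s : {set 'I_(gn G)}) : bool :=
  [exists u, exists v, @gadj G u v && (s == [set u; v])].

Definition inc_univ (G : graph) : finType :=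
  ('I_(gn G) + {s : {set 'I_(gn G)} | @is_edge G s})%type.

Definition inc_rel (G : graph) : rel (inc_univ G) :=
  fun a b => match a, b with
             | inl v, inr s => v \in val s
             | _, _ => false
             end.

Inductive mso : Type :=
| MEq  of nat & nat
| MRel of nat & nat
| MIn  of nat & nat
| MNot of mso
| MAnd of mso & mso
| MEx1 of nat & mso
| MEx2 of nat & mso.

Definition upd (T : Type) (e : nat -> T) (i : nat) (a : T) : nat -> T :=
  fun j => if j == i then a else e j.

Fixpoint holds (A : finType) (R : rel A) (e1 : nat -> A) (e2 : nat -> {set A})
    (f : mso) : Prop :=
  match f with
  | MEq x y => e1 x = e1 y
  | MRel x y => R (e1 x) (e1 y)
  | MIn x X => e1 x \in e2 X
  | MNot g => ~ holds R e1 e2 g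
  | MAnd g h => holds R e1 e2 g /\ holds R e1 e2 h
  | MEx1 x g => exists a, holds R (upd e1 x a) e2 g
  | MEx2 X g => exists S, holds R e1 (upd e2 X S) g
  end.

Definition env_xy (A : Type) (a b : A) : nat -> A :=
  fun i => if i == 0 then a else b.

Definition linear_order (A : Type) (R : A -> A -> Prop) : Prop :=
  [/\ (forall a, R a a),
      (forall a b, R a b -> R b a -> a = b),
      (forall a b c, R a b -> R b c -> R a c)
    & (forall a b, R a b \/ R b a)].

Definition mso_defines_order (phi : mso) (C : graph -> Prop) : Prop :=
  forall G, C G -> 0 < #|{: inc_univ G}| ->
    exists P : nat -> {set inc_univ G},
      linear_order (fun a b => holds (@inc_rel G) (env_xy a b) P phi).

Definition mso2_orderable (C : graph -> Prop) : Prop :=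
  exists phi : mso, mso_defines_order phi C.

Definition hered_mso2_unorderable (C : graph -> Prop) : Prop :=
  ~ finite_up_to_iso C /\
  forall D : graph -> Prop, (forall G, D G -> C G) ->
    ~ finite_up_to_iso D -> ~ mso2_orderable D.

From Stdlib Require Import Setoid.
From mathcomp Require Import all_boot.
Set Implicit Arguments. Unset Strict Implicit. Unset Printing Implicit Defensive.

(* Finite classes are orderable: if all incidence structures have at most b
   elements, the parameters P_i = {c | rank c <= i} (i < b) let a
   quantifier-free formula define the order by enumeration rank.  Conversely,
   MSO truth is invariant under automorphisms that fix the parameters read by
   the formula, and such an automorphism exchanging two vertices prevents the
   formula from defining an order.  The core fact is that every large graph
   with a decomposition of bounded depth and width has one: the parameters
   colour vertices and edges with finitely many colours, and by induction on
   the depth either some part of the decomposition is large, or by pigeonhole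
   two parts have the same isomorphism type relative to the few points they
   touch, and swapping these twins is an automorphism.  Tree decompositions of
   height n yield such decompositions of depth n+1.  Finally, edgeless graphs
   show that the class of all these graphs is infinite. *)

(* The set variables X_0, ..., X_(set_bound f - 1) include all those read by f. *)
Fixpoint set_bound (f : mso) : nat :=
  match f with
  | MIn _ X => X.+1
  | MNot g => set_bound g
  | MAnd g h => maxn (set_bound g) (set_bound h)
  | MEx1 _ g => set_bound g
  | MEx2 X g => maxn X.+1 (set_bound g)
  | _ => 0
  end.

Lemma holds_automorphism (A : finType) (R : rel A) (s : A -> A) :
  bijective s -> (forall a b, R (s a) (s b) = R a b) ->
  forall f (e1 e1' : nat -> A) (e2 e2' : nat -> {set A}),
    (forall i, e1' i = s (e1 i)) ->
    (forall X, X < set_bound f -> forall a, (s a \in e2' X) = (a \in e2 X)) ->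
  holds R e1 e2 f <-> holds R e1' e2' f.
Proof.
move=> [si sK siK] sR; elim=> [x y|x y|x X|g IH|g IHg h IHh|x g IH|X g IH]
  e1 e1' e2 e2' he1 he2 /=; rewrite ?he1.
- by split=> [->|/(can_inj sK)].
- by rewrite sR.
- by rewrite he2.
- by rewrite (IH e1 e1' e2 e2').
- by rewrite (IHg e1 e1' e2 e2') ?(IHh e1 e1' e2 e2') // => Y hY;
    apply: he2; rewrite (leq_trans hY) ?leq_maxl ?leq_maxr.
- have he1a a i : upd e1' x (s a) i = s (upd e1 x a i).
    by rewrite /upd; case: (i == x).
  split=> [[a Ha]|[b Hb]].
    by exists (s a); rewrite -(IH (upd e1 x a) _ e2 e2').
  exists (si b); rewrite (IH (upd e1 x (si b)) (upd e1' x b) e2 e2') // => i.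
  by rewrite -{1}(siK b) he1a.
- have he2X Y (S S' : {set A}) : Y < set_bound g -> (forall a, (s a \in S') = (a \in S)) ->
      forall a, (s a \in upd e2' X S' Y) = (a \in upd e2 X S Y).
    move=> hY hS a; rewrite /upd; case: (Y == X) => //.
    by apply: he2; rewrite (leq_trans hY) ?leq_maxr.
  split=> [[S HS]|[S HS]].
    exists [set b | si b \in S].
    rewrite -(IH e1 e1' (upd e2 X S)) // => Y hY.
    by apply: he2X => // a; rewrite inE sK.
  exists [set b | s b \in S]; rewrite (IH e1 e1' _ (upd e2' X S)) // => Y hY.
  by apply: he2X => // a; rewrite inE.
Qed.

(* Automorphisms of a labelled structure: a labelling [lab] of pairs of points
   ([None] meaning "no edge") together with a colouring [col] of points. *)
Definition nontrivial_automorphism (V : finType) (L C : Type)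
    (lab : V -> V -> option L) (col : V -> C) (s : V -> V) : Prop :=
  [/\ involutive s, exists x, s x != x,
      (forall u v, lab (s u) (s v) = lab u v) & (forall v, col (s v) = col v)].

Section TwinSwap.
(* Exchanging two "twin" sets Y1 and Y2, which only touch each other and the
   rest of the structure through the anchor set A, is an automorphism. *)
Variables (V : finType) (L C : Type) (lab : V -> V -> option L) (col : V -> C).
Variables (A Y1 Y2 : {set V}) (s : V -> V).
Hypothesis lab_sym : forall u v, lab u v = lab v u.
Hypothesis sK : involutive s.
Hypothesis s_out : forall v, v \notin Y1 :|: Y2 -> s v = v.
Hypothesis s_12 : forall u, u \in Y1 -> s u \in Y2.
Hypothesis s_21 : forall u, u \in Y2 -> s u \in Y1.
Hypothesis sep12 : forall u v, u \in Y1 -> v \in Y2 -> lab u v = None.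
Hypothesis sep_out : forall u v,
  u \in Y1 :|: Y2 -> v \notin Y1 :|: Y2 :|: A -> lab u v = None.
Hypothesis twin_col : forall u, u \in Y1 -> col (s u) = col u.
Hypothesis twin_inner : forall u v, u \in Y1 -> v \in Y1 -> lab (s u) (s v) = lab u v.
Hypothesis twin_anchor : forall u a, u \in Y1 -> a \in A -> lab (s u) a = lab u a.

Lemma twin_swap_lab1 u v : u \in Y1 -> lab (s u) (s v) = lab u v.
Proof.
move=> uY1; have suY2 := s_12 uY1.
case vY1: (v \in Y1); first exact: twin_inner.
case vY2: (v \in Y2).
  by rewrite lab_sym !sep12 ?s_21.
have vout : v \notin Y1 :|: Y2 by rewrite inE vY1 vY2.
rewrite (s_out vout); case vA: (v \in A); first exact: twin_anchor.
by rewrite !sep_out ?inE ?uY1 ?suY2 ?orbT // vY1 vY2 vA.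
Qed.

Lemma twin_swap_lab u v : lab (s u) (s v) = lab u v.
Proof.
case uY1: (u \in Y1); first exact: twin_swap_lab1.
case uY2: (u \in Y2).
  by apply/esym; rewrite -{1}(sK u) -{1}(sK v) twin_swap_lab1 ?s_21.
case vY1: (v \in Y1); first by rewrite lab_sym twin_swap_lab1 // lab_sym.
case vY2: (v \in Y2).
  by apply/esym; rewrite -{1}(sK u) -{1}(sK v) lab_sym twin_swap_lab1 ?s_21 // lab_sym.
by rewrite !s_out ?inE ?uY1 ?uY2 ?vY1 ?vY2.
Qed.

Lemma twin_swap_col v : col (s v) = col v.
Proof.
case vY1: (v \in Y1); first exact: twin_col.
case vY2: (v \in Y2); first by apply/esym; rewrite -{1}(sK v) twin_col ?s_21.
by rewrite s_out ?inE ?vY1 ?vY2.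
Qed.

End TwinSwap.

Section SeqSwap.
Variables (T : eqType) (x0 : T) (s1 s2 : seq T).
Hypotheses (s1_uniq : uniq s1) (s2_uniq : uniq s2) (size12 : size s1 = size s2).
Hypothesis disjoint12 : forall x, x \in s1 -> x \notin s2.

Definition seq_swap (x : T) : T :=
  if x \in s1 then nth x0 s2 (index x s1)
  else if x \in s2 then nth x0 s1 (index x s2) else x.

Lemma seq_swap_nth1 i : i < size s1 -> seq_swap (nth x0 s1 i) = nth x0 s2 i.
Proof. by move=> lti; rewrite /seq_swap mem_nth // index_uniq. Qed.

Lemma seq_swap_nth2 i : i < size s2 -> seq_swap (nth x0 s2 i) = nth x0 s1 i.
Proof.
move=> lti; have x2 := mem_nth x0 lti.
have x1 : nth x0 s2 i \notin s1 by apply: contraL x2; apply: disjoint12.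
by rewrite /seq_swap (negbTE x1) x2 index_uniq.
Qed.

Lemma seq_swap_out x : x \notin s1 -> x \notin s2 -> seq_swap x = x.
Proof. by rewrite /seq_swap => /negbTE -> /negbTE ->. Qed.

Lemma seq_swap12 x : x \in s1 -> seq_swap x \in s2.
Proof.
by move=> x1; rewrite -(nth_index x0 x1) seq_swap_nth1 ?mem_nth -?size12 ?index_mem.
Qed.

Lemma seq_swap21 x : x \in s2 -> seq_swap x \in s1.
Proof.
by move=> x2; rewrite -(nth_index x0 x2) seq_swap_nth2 ?mem_nth ?size12 ?index_mem.
Qed.

Lemma seq_swapK : involutive seq_swap.
Proof.
move=> x; case x1: (x \in s1).
  rewrite -(nth_index x0 x1) seq_swap_nth1 ?index_mem //.
  by rewrite seq_swap_nth2 // -size12 index_mem.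
case x2: (x \in s2); last by rewrite !seq_swap_out ?x1 ?x2.
rewrite -(nth_index x0 x2) seq_swap_nth2 ?index_mem //.
by rewrite seq_swap_nth1 // size12 index_mem.
Qed.

End SeqSwap.
Lemma set_swap_spec (V : finType) (x0 : V) (Y1 Y2 : {set V}) :
  #|Y1| = #|Y2| -> (forall x, x \in Y1 -> x \notin Y2) ->
  let s := seq_swap x0 (enum Y1) (enum Y2) in
  [/\ involutive s, (forall v, v \notin Y1 :|: Y2 -> s v = v),
      (forall u, u \in Y1 -> s u \in Y2), (forall u, u \in Y2 -> s u \in Y1)
    & (forall i, i < #|Y1| -> s (nth x0 (enum Y1) i) = nth x0 (enum Y2) i)].
Proof.
move=> card12 disj12 s.
have sz12 : size (enum Y1) = size (enum Y2) by rewrite -!cardE.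
have disj x : x \in enum Y1 -> x \notin enum Y2 by rewrite !mem_enum; apply: disj12.
split.
- exact: seq_swapK (enum_uniq _) (enum_uniq _) sz12 disj.
- by move=> v; rewrite inE negb_or => /andP[v1 v2]; apply: seq_swap_out; rewrite mem_enum.
- by move=> u; rewrite -(mem_enum Y1) -(mem_enum Y2); apply: seq_swap12; rewrite ?enum_uniq.
- by move=> u; rewrite -(mem_enum Y1) -(mem_enum Y2); apply: seq_swap21; rewrite ?enum_uniq.
- by move=> i lti; apply: seq_swap_nth1; rewrite ?enum_uniq -?cardE.
Qed.

Lemma pigeonhole_family (V T : finType) (f : {set V} -> T) (P : {set {set V}}) m :
  (forall Y, Y \in P -> #|Y| <= m) -> #|T| * m < #|cover P| ->
  exists Y1 Y2, [/\ Y1 \in P, Y2 \in P, Y1 != Y2 & f Y1 = f Y2].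
Proof.
move=> small big.
have [/existsP[Y1 /andP[Y1P /existsP[Y2 /and3P[Y2P neqY /eqP eqf]]]]|no_twins] :=
  boolP [exists Y1 in P, exists Y2 in P, (Y1 != Y2) && (f Y1 == f Y2)].
  by exists Y1, Y2.
have inj_f : {in P &, injective f}.
  move=> Y1 Y2 Y1P Y2P eqf; apply/eqP/negPn/negP => neqY.
  by case/negP: no_twins; apply/existsP; exists Y1; rewrite Y1P;
    apply/existsP; exists Y2; rewrite Y2P neqY eqf eqxx.
move: big; rewrite ltnNge => /negP[].
apply: leq_trans (leq_card_cover P) _.
apply: (@leq_trans (\sum_(Y in P) m)); first exact: leq_sum.
by rewrite sum_nat_const leq_mul2r (@leq_card_in _ _ f P inj_f) orbT.
Qed.

Definition apart (V : finType) (adj : rel V) (Y Z : {set V}) : Prop :=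
  forall u v, u \in Y -> v \in Z -> (u != v) && ~~ adj u v.

Fixpoint decomposable (V : finType) (adj : rel V) (k d : nat) (X : {set V}) : Prop :=
  match d with
  | 0 => X = set0
  | d'.+1 => exists (R : {set V}) (P : {set {set V}}),
     [/\ #|R| <= k.+1, X \subset R :|: cover P,
         (forall Y, Y \in P -> Y \subset X :\: R),
         (forall Y Z, Y \in P -> Z \in P -> Y != Z -> apart adj Y Z)
       & (forall Y, Y \in P -> decomposable adj k d' Y)]
  end.

Lemma part_neighbours (V : finType) (adj : rel V) (A X R : {set V})
    (P : {set {set V}}) :
  (forall u w, u \in X -> w \notin X -> adj u w -> w \in A) ->
  X \subset R :|: cover P -> (forall Y, Y \in P -> Y \subset X :\: R) ->
  (forall Y Z, Y \in P -> Z \in P -> Y != Z -> apart adj Y Z) ->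
  forall Y, Y \in P -> forall u w, u \in Y -> w \notin Y -> adj u w -> w \in A :|: R.
Proof.
move=> nbX covX subP apartP Y YP u w uY wY uw; rewrite inE.
have /setDP[uX _] := subsetP (subP Y YP) u uY.
case wX: (w \in X); last by rewrite (nbX u w) ?wX.
have /setUP[->|/bigcupP[Z ZP wZ]] := subsetP covX w wX; first by rewrite orbT.
have neqYZ : Y != Z by apply: contraNneq wY => ->.
by have /andP[_] := apartP Y Z YP ZP neqYZ u w uY wZ; rewrite uw.
Qed.

Section Profile.
(* The isomorphism type of a set Y of at most m points, relative to a list of
   at most na anchors, in a finitely labelled and coloured structure. *)
Variables (V K : finType) (lab : V -> V -> option K) (col : V -> K).
Variables (m na : nat) (x0 : V) (anchors : seq V).

Definition profile_type : finType :=
  ('I_m.+1 * {ffun 'I_m -> K} * {ffun 'I_m * 'I_m -> option K}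
    * {ffun 'I_m * 'I_na -> option K})%type.

Definition profile (Y : {set V}) : profile_type :=
  let y i := nth x0 (enum Y) i in
  (inord #|Y|, [ffun i : 'I_m => col (y i)],
   [ffun ij : 'I_m * 'I_m => lab (y ij.1) (y ij.2)],
   [ffun ij : 'I_m * 'I_na => lab (y ij.1) (nth x0 anchors ij.2)]).

Lemma twins_automorphism (Y1 Y2 : {set V}) :
  (forall u v, lab u v = lab v u) -> size anchors <= na ->
  #|Y1| <= m -> #|Y2| <= m -> Y1 != Y2 ->
  (forall u v, u \in Y1 -> v \in Y2 -> (u != v) && (lab u v == None)) ->
  (forall u v, u \in Y1 :|: Y2 -> v \notin Y1 :|: Y2 :|: [set x in anchors] ->
     lab u v = None) ->
  profile Y1 = profile Y2 -> exists s, nontrivial_automorphism lab col s.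
Proof.
move=> lab_sym anchors_na Y1m Y2m neqY sep12 sep_out [size12 col12 inner12 anchor12].
have card12 : #|Y1| = #|Y2|.
  by move/(congr1 val): size12; rewrite /= !inordK.
have disj12 x : x \in Y1 -> x \notin Y2.
  by move=> x1; apply/negP => x2; case/andP: (sep12 x x x1 x2); rewrite eqxx.
have [sK s_out s_12 s_21 s_nth] := set_swap_spec x0 card12 disj12.
set s := seq_swap _ _ _ in sK s_out s_12 s_21 s_nth.
pose e1 := enum Y1; pose e2 := enum Y2.
have at_index u : u \in Y1 -> exists2 i : 'I_m, i < #|Y1| & u = nth x0 e1 i.
  rewrite -mem_enum => u1; have lti : index u e1 < #|Y1| by rewrite cardE index_mem.
  by exists (Ordinal (leq_trans lti Y1m)); rewrite ?nth_index.
have Y1_0 : 0 < #|Y1|.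
  rewrite lt0n; apply: contraNneq neqY => /cards0_eq Y10.
  by rewrite Y10; move: card12; rewrite Y10 cards0 => /esym/cards0_eq ->.
exists s; split=> //.
- exists (nth x0 e1 0); rewrite s_nth //.
  have x1 : nth x0 e1 0 \in Y1 by rewrite -mem_enum mem_nth -?cardE.
  have x2 : nth x0 e2 0 \in Y2 by rewrite -mem_enum mem_nth -?cardE -?card12.
  by case/andP: (sep12 _ _ x1 x2); rewrite eq_sym.
- apply: (twin_swap_lab (A := [set x in anchors]) (Y1 := Y1) (Y2 := Y2)) => //.
  + by move=> u v u1 v2; case/andP: (sep12 u v u1 v2) => _ /eqP.
  + move=> u v /at_index[i lti ->] /at_index[j ltj ->]; rewrite !s_nth //.
    by move/ffunP/(_ (i, j)): inner12; rewrite !ffunE.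
  + move=> u x /at_index[i lti ->]; rewrite inE s_nth // => /(nthP x0)[j ltj <-].
    have ltj' : j < na by apply: leq_trans anchors_na.
    by move/ffunP/(_ (i, Ordinal ltj')): anchor12; rewrite !ffunE.
- apply: (twin_swap_col (Y1 := Y1) (Y2 := Y2)) => // u /at_index[i lti ->].
  by rewrite s_nth //; move/ffunP/(_ i): col12; rewrite !ffunE.
Qed.

End Profile.

Lemma large_decomposable_automorphism (K : finType) (k d a : nat) :
  exists M, forall (V : finType) (adj : rel V) (lab : V -> V -> option K)
    (col : V -> K) (A X : {set V}),
    (forall u v, lab u v = lab v u) -> (forall u v, ~~ adj u v -> lab u v = None) ->
    #|A| <= a -> (forall u w, u \in X -> w \notin X -> adj u w -> w \in A) ->
    decomposable adj k d X -> M < #|X| -> exists s, nontrivial_automorphism lab col s.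
Proof.
elim: d a => [|d IH] a.
  by exists 0 => V adj lab col A X _ _ _ _ /= ->; rewrite cards0.
have [m large_part] := IH (a + k.+1).
exists (k.+1 + #|profile_type K m (a + k.+1)| * m).
move=> V adj lab col A X lab_sym lab_adj cardA nbX [R [P [cardR covX subP apartP decP]]] bigX.
have nbP := part_neighbours nbX covX subP apartP.
have cardAR : #|A :|: R| <= a + k.+1 by rewrite (leq_trans (leq_card_setU _ _)) ?leq_add.
have [/existsP[Y /andP[YP bigY]]|] := boolP [exists Y in P, m < #|Y|].
  exact: large_part lab_sym lab_adj cardAR (nbP Y YP) (decP Y YP) bigY.
rewrite negb_exists => /forallP smallP.
have {}smallP Y : Y \in P -> #|Y| <= m by move=> YP; have := smallP Y; rewrite YP -leqNgt.
have [x0 _] : {x0 | x0 \in X} by apply/sigW/set0Pn; rewrite -card_gt0 (leq_ltn_trans _ bigX).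
pose anchors := enum (A :|: R).
have bigcover : #|profile_type K m (a + k.+1)| * m < #|cover P|.
  rewrite -(ltn_add2l k.+1) (leq_trans bigX) // (leq_trans (subset_leq_card covX)) //.
  by rewrite (leq_trans (leq_card_setU _ _)) ?leq_add2r.
have [Y1 [Y2 [Y1P Y2P neqY eqprof]]] :=
  pigeonhole_family (profile lab col m (a + k.+1) x0 anchors) smallP bigcover.
apply: (twins_automorphism lab_sym _ (smallP Y1 Y1P) (smallP Y2 Y2P) neqY _ _ eqprof).
- by rewrite -cardE.
- move=> u v uY1 vY2; have /andP[-> /negP nadj] := apartP Y1 Y2 Y1P Y2P neqY u v uY1 vY2.
  by rewrite lab_adj //; apply/negP.
- move=> u v uY vout; rewrite lab_adj //; apply/negP => uv.
  move: vout; rewrite !inE mem_enum !negb_or => /andP[/andP[vY1 vY2] /negP[]].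
  by case/setUP: uY => uY; [apply: (nbP Y1 Y1P u) | apply: (nbP Y2 Y2P u)].
Qed.

Section RootedTree.
Variables (T : eqType) (par : T -> T) (r : T) (d : nat).
Hypotheses (par_root : par r = r) (reach_root : forall t, iter d par t = r).

Definition anc (t s : T) : bool := t \in traject par s d.+1.

Lemma iter_root i : iter i par r = r.
Proof. by elim: i => //= i ->. Qed.

Lemma ancP t s : reflect (exists i, iter i par s = t) (anc t s).
Proof.
apply: (iffP trajectP) => [[i _ ->]|[i <-]]; first by exists i.
have [le_id|lt_di] := leqP i d; first by exists i.
exists d => //; rewrite -(subnK (ltnW lt_di)) iterD reach_root.
by rewrite iter_root.
Qed.

Lemma anc_trans t s u : anc t s -> anc s u -> anc t u.
Proof.
move=> /ancP[i <-] /ancP[j <-]; apply/ancP; exists (i + j); exact: iterD.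
Qed.

Lemma cycle_root i x : iter i.+1 par x = x -> x = r.
Proof.
move=> cyc; have cyc_n n : iter (i.+1 * n) par x = x.
  by elim: n => [|n IHn]; rewrite ?muln0 // mulnSr iterD cyc IHn.
by rewrite -(cyc_n d) mulSnr iterD reach_root iter_root.
Qed.

Lemma child_not_anc c : c != par c -> ~~ anc c (par c).
Proof.
move=> nc; apply/ancP => -[i ci].
have cr : c = r by apply: (@cycle_root i); rewrite iterSr.
by move: nc; rewrite cr par_root eqxx.
Qed.

Lemma sibling_iter_eq c c' s i j : par c = par c' -> c' != par c' ->
  iter i par s = c -> iter j par s = c' -> i <= j -> c = c'.
Proof.
move=> pcc' nc' ci cj le_ij; move: cj; rewrite -(subnK le_ij) iterD ci.
case: (j - i) => [//|q] cq; case/negP: (child_not_anc nc').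
by apply/ancP; exists q; rewrite -pcc' -iterSr.
Qed.

Lemma sibling_anc_eq c c' s : par c = par c' -> c != par c -> c' != par c' ->
  anc c s -> anc c' s -> c = c'.
Proof.
move=> pcc' nc nc' /ancP[i ci] /ancP[j cj]; have [le_ij|/ltnW le_ji] := leqP i j.
  exact: sibling_iter_eq ci cj le_ij.
exact/esym/(sibling_iter_eq (esym pcc') nc cj ci le_ji).
Qed.

Lemma anc_child t s : anc t s -> s != t -> exists c, [/\ par c = t, c != t & anc c s].
Proof.
move=> /ancP[i]; elim: i s => [|i IHi] s; first by move=> /= ->; rewrite eqxx.
rewrite iterSr => it nst; have [pst|npst] := eqVneq (par s) t.
  by exists s; split=> //; apply/ancP; exists 0.
have [c [pc nc cps]] := IHi _ it npst; exists c; split=> //.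
by apply: anc_trans cps _; apply/ancP; exists 1.
Qed.

End RootedTree.

Section TreeDecomposition.
(* A tree decomposition of height at most d and width at most k yields a
   depth-(d+1) decomposition: the part of a node t collects the points whose
   topmost bag lies below t, its root bag the points whose topmost bag is t. *)
Variables (V : finType) (adj : rel V) (k d m : nat).
Variables (par : 'I_m -> 'I_m) (r : 'I_m) (B : 'I_m -> {set V}).
Hypotheses (par_root : par r = r) (reach_root : forall t, iter d par t = r).
Hypothesis bags_cover : forall v, exists t, v \in B t.
Hypothesis bags_edges : forall u v, adj u v -> exists t, (u \in B t) && (v \in B t).
Hypothesis bags_connected : forall v t1 t2, v \in B t1 -> v \in B t2 ->
  connect [rel a b | [&& tree_adj par a b, v \in B a & v \in B b]] t1 t2.
Hypothesis bags_small : forall t, #|B t| <= k.+1.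

Local Notation anc := (anc par d).
Local Notation ancP := (ancP par_root reach_root).
Local Notation anc_trans := (anc_trans par_root reach_root).
Local Notation child_not_anc := (child_not_anc par_root reach_root).
Local Notation sibling_anc_eq := (sibling_anc_eq par_root reach_root).
Local Notation anc_child := (anc_child par_root reach_root).

Definition is_top v t := (v \in B t) && ((t == r) || (v \notin B (par t))).

Lemma top_exists v : exists t, is_top v t.
Proof.
have [t0 vt0] := bags_cover v.
suff top_above j t : v \in B t -> iter j par t = r -> exists t, is_top v t.
  exact: top_above d t0 vt0 (reach_root t0).
elim: j t => [|j IHj] t vt; first by move=> /= tr; exists t; rewrite /is_top vt tr eqxx.
rewrite iterSr; case vp: (v \in B (par t)); first exact: IHj.
by exists t; rewrite /is_top vt vp orbT.
Qed.

Definition top v : 'I_m := odflt r [pick t | is_top v t].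

Lemma top_spec v : is_top v (top v).
Proof.
rewrite /top; case: pickP => [t //|no_top].
by have [t] := top_exists v; rewrite no_top.
Qed.

(* Every bag containing v lies below the topmost one, since the bags
   containing v form a connected subtree. *)
Lemma top_anc v s : v \in B s -> anc (top v) s.
Proof.
have /andP[vtop top_root] := top_spec v.
have step x y : anc (top v) x -> tree_adj par x y -> v \in B y -> anc (top v) y.
  move=> /ancP[[|i] ax] /andP[_ /orP[/eqP pxy|/eqP pyx]] vy; apply/ancP.
  - move: top_root vy; rewrite -ax -pxy => /orP[/eqP xr|/negbTE->] //.
    by move=> _; exists 0; rewrite /= in xr *; rewrite xr par_root.
  - by exists 1; rewrite /= pyx.
  - by exists i; rewrite -pxy -iterSr.
  - by exists i.+2; rewrite iterSr pyx.
suff walk x q : anc (top v) x ->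
    path [rel a b | [&& tree_adj par a b, v \in B a & v \in B b]] x q ->
    anc (top v) (last x q).
  by move=> /(bags_connected vtop)/connectP[q vq ->]; apply: walk vq; apply/ancP; exists 0.
elim: q x => [|y q IHq] x //= ax /andP[/and3P[xy _ vy] yq].
exact: IHq (step x y ax xy vy) yq.
Qed.

Definition subtree_set t := [set v | anc t (top v)].
Definition children t := [set c | (par c == t) && (c != t)].

Definition below t h := forall s, anc t s -> exists2 i, i < h & iter i par s = t.

Lemma below_child t c h : below t h.+1 -> c \in children t -> below c h.
Proof.
rewrite inE => bt /andP[/eqP pc nc] s /ancP[i ci].
have [j lt_jh tj] : exists2 j, j < h.+1 & iter j par s = t.
  by apply: bt; apply/ancP; exists i.+1; rewrite iterS ci.
exists i => //; rewrite ltnNge; apply/negP => le_hi.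
have ncp : c != par c by rewrite pc.
case/negP: (child_not_anc ncp); apply/ancP; exists (i - j).
by rewrite pc -tj -iterD subnK // (leq_trans _ le_hi).
Qed.

(* Subtrees of distinct siblings are apart: an edge or a common point would
   put both siblings above a common bag. *)
Lemma sibling_subtrees_apart c c' : par c = par c' -> c != par c -> c' != par c' ->
  c != c' -> apart adj (subtree_set c) (subtree_set c').
Proof.
move=> pcc' nc nc' neq u v; rewrite !inE => cu c'v.
have siblings s : anc c s -> anc c' s -> c = c'.
  exact: sibling_anc_eq pcc' nc nc'.
apply/andP; split.
  by apply: contraNneq neq => uv; apply/eqP/(siblings (top u)); rewrite // uv.
apply/negP => /bags_edges[s /andP[us vs]]; case/eqP: neq; apply: siblings.
  exact: anc_trans cu (top_anc us).
exact: anc_trans c'v (top_anc vs).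
Qed.

(* The subtree of t decomposes into the points topped at t and the subtrees
   of the children of t. *)
Lemma subtree_decomposable h t : below t h -> decomposable adj k h (subtree_set t).
Proof.
elim: h t => [|h IHh] t bt /=.
  by apply/setP => v; rewrite !inE; apply/negbTE/negP => /bt[].
exists [set v | top v == t], (subtree_set @: children t); split.
- apply: leq_trans (bags_small t); apply/subset_leq_card/subsetP => v.
  by rewrite inE => /eqP <-; case/andP: (top_spec v).
- apply/subsetP => v; rewrite inE => atv; have [tv|ntv] := eqVneq (top v) t.
    by rewrite !inE tv eqxx.
  have [c [pc nc cv]] := anc_child atv ntv.
  rewrite inE; apply/orP; right; apply/bigcupP; exists (subtree_set c).
    by apply: imset_f; rewrite inE pc eqxx nc.
  by rewrite inE.
- move=> Y /imsetP[c]; rewrite inE => /andP[/eqP pc nc] ->.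
  have ncp : c != par c by rewrite pc.
  apply/subsetP => v; rewrite !inE => cv; apply/andP; split.
    by apply: contraNneq (child_not_anc ncp) => tv; rewrite pc -tv.
  by apply: anc_trans cv; apply/ancP; exists 1; rewrite /= pc.
- move=> Y Z /imsetP[c cch ->] /imsetP[c' c'ch ->] neq.
  move: cch c'ch; rewrite !inE => /andP[/eqP pc nc] /andP[/eqP pc' nc'].
  apply: sibling_subtrees_apart; rewrite ?pc ?pc' //.
  by apply: contraNneq neq => ->.
- by move=> Y /imsetP[c cch ->]; apply: IHh; apply: below_child cch.
Qed.

Lemma tree_decomposition_decomposable : decomposable adj k d.+1 [set: V].
Proof.
have -> : [set: V] = subtree_set r.
  apply/setP => v; rewrite /subtree_set !inE; symmetry.
  by apply/ancP; exists d; apply: reach_root.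
by apply: subtree_decomposable => s _; exists d; rewrite ?reach_root.
Qed.

End TreeDecomposition.

Lemma depth_tw_decomposable n k (G : graph) :
  depth_tw_le n k G -> decomposable (@gadj G) k n.+1 [set: 'I_(gn G)].
Proof.
case=> m [par [r [B [par_root reach_root cover [edges connected small]]]]].
exact: (tree_decomposition_decomposable par_root reach_root cover edges connected small).
Qed.

Section IncidenceLift.
(* The colours that the sets P_0, ..., P_(N-1) induce on the vertices and
   edges of G; a colour-preserving automorphism of G lifts to an automorphism
   of the incidence structure [G] fixing each P_i setwise. *)
Variables (G : graph) (N : nat) (P : nat -> {set inc_univ G}).

Local Notation vertex := 'I_(gn G).
Local Notation edge := {s : {set vertex} | is_edge s}.

Definition vertex_colour (v : vertex) : {ffun 'I_N -> bool} :=
  [ffun i : 'I_N => (inl v : inc_univ G) \in P i].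

Definition edge_colour (e : edge) : {ffun 'I_N -> bool} :=
  [ffun i : 'I_N => (inr e : inc_univ G) \in P i].

Definition edge_label (u v : vertex) : option {ffun 'I_N -> bool} :=
  if @gadj G u v then omap edge_colour (insub [set u; v]) else None.

Lemma is_edge_adj u v : @gadj G u v -> is_edge [set u; v].
Proof. by move=> uv; apply/existsP; exists u; apply/existsP; exists v; rewrite uv eqxx. Qed.

Lemma edge_label_adj u v : @gadj G u v ->
  exists2 e : edge, val e = [set u; v] & edge_label u v = Some (edge_colour e).
Proof.
move=> uv; rewrite /edge_label uv insubT ?is_edge_adj //= => uv_edge.
by exists (Sub [set u; v] uv_edge).
Qed.

Lemma edge_label_sym u v : edge_label u v = edge_label v u.
Proof. by rewrite /edge_label (@gadj_sym G u v) setUC. Qed.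

Lemma edge_label_none u v : ~~ @gadj G u v -> edge_label u v = None.
Proof. by rewrite /edge_label => /negbTE ->. Qed.

Variable s : vertex -> vertex.
Hypothesis s_aut : nontrivial_automorphism edge_label vertex_colour s.

Lemma aut_adj u v : @gadj G (s u) (s v) = @gadj G u v.
Proof.
have [sK _ slab _] := s_aut.
have adj_lab x y : @gadj G x y = (edge_label x y != None).
  by apply/idP/idP => [/edge_label_adj[e _ ->] //|]; apply: contraR => /edge_label_none ->.
by rewrite !adj_lab slab.
Qed.

Lemma aut_edge (e : edge) : is_edge (s @: val e).
Proof.
case: e => _ /= /existsP[u /existsP[v /andP[uv /eqP ->]]].
by rewrite imsetU1 imset_set1 is_edge_adj ?aut_adj.
Qed.

Lemma aut_edge_colour (e : edge) : edge_colour (Sub _ (aut_edge e)) = edge_colour e.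
Proof.
have [_ _ slab _] := s_aut.
have /existsP[u /existsP[v /andP[uv /eqP euv]]] := valP e.
have [e1 e1uv lab1] := edge_label_adj uv.
have [e2 e2uv lab2] := edge_label_adj (etrans (aut_adj u v) uv).
have -> : e = e1 by apply: val_inj; rewrite euv e1uv.
have -> : Sub _ (aut_edge e1) = e2.
  by apply: val_inj; rewrite SubK e1uv e2uv imsetU1 imset_set1.
by move: (slab u v); rewrite lab1 lab2 => -[].
Qed.

Definition lift (a : inc_univ G) : inc_univ G :=
  match a with inl v => inl (s v) | inr e => inr (Sub _ (aut_edge e)) end.

Lemma lift_involutive : involutive lift.
Proof.
have [sK _ _ _] := s_aut.
case=> [v|e] /=; first by rewrite sK.
by congr inr; apply: val_inj; rewrite /= -imset_comp (eq_imset _ sK) imset_id.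
Qed.

Lemma lift_inc a b : inc_rel (lift a) (lift b) = inc_rel a b.
Proof.
have [sK _ _ _] := s_aut.
by case: a b => [v|e] [w|f] //=; rewrite mem_imset //; apply: can_inj sK.
Qed.

Lemma lift_colours a i : i < N -> (lift a \in P i) = (a \in P i).
Proof.
have [_ _ _ scol] := s_aut; move=> ltiN; case: a => [v|e] /=.
  by move: (scol v) => /ffunP/(_ (Ordinal ltiN)); rewrite !ffunE.
by move: (aut_edge_colour e) => /ffunP/(_ (Ordinal ltiN)); rewrite !ffunE.
Qed.

End IncidenceLift.

Definition graph_code (M : nat) : finType :=
  {n : 'I_M.+1 & {ffun 'I_n * 'I_n -> bool}}.

Section CodeGraph.
Variables (M : nat) (c : graph_code M).

Definition code_adj : rel 'I_(tag c) :=
  fun u v => (u != v) && (tagged c (u, v) || tagged c (v, u)).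

Lemma code_adj_irr : irreflexive code_adj.
Proof. by move=> u; rewrite /code_adj eqxx. Qed.

Lemma code_adj_sym : symmetric code_adj.
Proof. by move=> u v; rewrite /code_adj eq_sym orbC. Qed.

Definition code_graph : graph := Graph code_adj_irr code_adj_sym.

End CodeGraph.

Lemma code_graph_iso M (G : graph) :
  gn G <= M -> exists c : graph_code M, graph_iso G (code_graph c).
Proof.
rewrite -ltnS => ltGM.
exists (existT _ (Ordinal ltGM) [ffun uv : 'I_(gn G) * 'I_(gn G) => @gadj G uv.1 uv.2]).
exists id; split=> [|u v]; first by exists id.
rewrite /= /code_adj /= !ffunE (@gadj_sym G v) orbb.
by have [->|//] := eqVneq u v; rewrite gadj_irr.
Qed.

Lemma bounded_finite M (C : graph -> Prop) :
  (forall G, C G -> gn G <= M) -> finite_up_to_iso C.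
Proof.
move=> C_small; exists #|graph_code M|, (fun i => code_graph (enum_val i)) => G CG.
have [c iso] := code_graph_iso (C_small G CG).
by exists (enum_rank c); rewrite enum_rankK.
Qed.

(* A nontrivial automorphism of G preserving the colours induced by the sets
   read by phi exchanges two vertices x and s x; then phi(x, s x) and
   phi(s x, x) are equivalent, so phi cannot define a linear order. *)
Lemma automorphism_blocks_order (G : graph) (phi : mso) (P : nat -> {set inc_univ G})
    (s : 'I_(gn G) -> 'I_(gn G)) :
  nontrivial_automorphism (edge_label (set_bound phi) P)
    (vertex_colour (set_bound phi) P) s ->
  ~ linear_order (fun a b => holds (@inc_rel G) (env_xy a b) P phi).
Proof.
move=> s_aut [_ antisym _ total]; have [sK [x sx] _ _] := s_aut.
pose l := lift s_aut.
have invariant a b : holds (@inc_rel G) (env_xy a b) P phi <->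
    holds (@inc_rel G) (env_xy (l a) (l b)) P phi.
  apply: (holds_automorphism (inv_bij (lift_involutive s_aut)) (lift_inc s_aut)).
    by move=> i; rewrite /env_xy; case: (i == 0).
  by move=> X ltX a'; apply: lift_colours.
have lx : l (inl x) = inl (s x) by [].
have lsx : l (inl (s x)) = inl x by rewrite /l /= sK.
case: (total (inl x) (inl (s x))) => phi_xy; have := (invariant _ _).1 phi_xy;
  rewrite lx lsx => phi_yx; have [] := antisym _ _ phi_xy phi_yx; apply/eqP.
- by rewrite eq_sym.
- by [].
Qed.

(* An MSO-orderable class of graphs of bounded depth tree-width has bounded
   order: a large member would have an automorphism as above. *)
Lemma orderable_bounded n k (C : graph -> Prop) :
  (forall G, C G -> depth_tw_le n k G) -> mso2_orderable C ->
  exists M, forall G, C G -> gn G <= M.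
Proof.
move=> C_dtw [phi phi_order].
have [M large_aut] :=
  large_decomposable_automorphism {ffun 'I_(set_bound phi) -> bool} k n.+1 0.
exists M => G CG; rewrite leqNgt; apply/negP => bigG.
have nonempty : 0 < #|{: inc_univ G}|.
  by apply/card_gt0P; exists (inl (Ordinal (leq_ltn_trans (leq0n M) bigG))).
have [P P_order] := phi_order G CG nonempty.
have [s s_aut] : exists s, nontrivial_automorphism (edge_label (set_bound phi) P)
    (vertex_colour (set_bound phi) P) s.
  apply: (large_aut _ (@gadj G) _ _ set0 [set: 'I_(gn G)]).
  - exact: edge_label_sym.
  - exact: edge_label_none.
  - by rewrite cards0.
  - by move=> u w _; rewrite inE.
  - exact: depth_tw_decomposable (C_dtw G CG).
  - by rewrite cardsT card_ord.
exact: automorphism_blocks_order s_aut P_order.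
Qed.

Lemma orderable_finite n k (C : graph -> Prop) :
  (forall G, C G -> depth_tw_le n k G) -> mso2_orderable C -> finite_up_to_iso C.
Proof. by move=> C_dtw /(orderable_bounded C_dtw)[M]; apply: bounded_finite. Qed.

Lemma iso_gn (G H : graph) : graph_iso G H -> gn G = gn H.
Proof.
case=> f [f_bij _]; rewrite -(card_ord (gn G)) -(card_ord (gn H)).
exact: bij_eq_card f_bij.
Qed.

(* phi_s(x, y): every set X_i, i in s, containing y contains x. *)
Definition rank_formula (s : seq nat) : mso :=
  foldr (fun i acc => MAnd (MNot (MAnd (MIn 1 i) (MNot (MIn 0 i)))) acc) (MEq 0 0) s.

Lemma holds_rank_formula (A : finType) (R : rel A) (P : nat -> {set A}) a b s :
  holds R (env_xy a b) P (rank_formula s) <->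
  (forall i, i \in s -> b \in P i -> a \in P i).
Proof.
elim: s => [|i s IHs] /=; first by split.
rewrite /env_xy /= IHs; split.
- move=> [bPa bP] j /predU1P[-> bi|/bP//].
  by apply/idPn => aNi; apply: bPa; split=> //; apply/negP.
- move=> bP; split=> [[bi []]|j js]; last by apply: bP; rewrite inE js orbT.
  by apply: bP; rewrite ?inE ?eqxx.
Qed.

Lemma linear_order_iff (A : Type) (R R' : A -> A -> Prop) :
  (forall a b, R a b <-> R' a b) -> linear_order R' -> linear_order R.
Proof.
move=> RR' [refl antisym trans total]; split.
- by move=> a; apply/RR'.
- by move=> a b /RR' ab /RR' ba; apply: antisym.
- by move=> a b c /RR' ab /RR' bc; apply/RR'; apply: trans ab bc.
- by move=> a b; case: (total a b) => ?; [left|right]; apply/RR'.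
Qed.

Lemma card_inc_univ (G : graph) : #|{: inc_univ G}| <= gn G + 2 ^ gn G.
Proof.
rewrite card_sum card_ord leq_add2l (leq_trans (leq_card _ val_inj)) //.
have := card_powerset [set: 'I_(gn G)]; rewrite cardsT card_ord => <-.
by rewrite -cardsT; apply/subset_leq_card/subsetP => A _; rewrite powersetE subsetT.
Qed.

(* A class finite up to isomorphism is MSO-orderable: if all incidence
   structures have at most b elements, the sets P_i = {c | rank c <= i}, i < b,
   let rank_formula [0, ..., b-1] define the order by enumeration rank. *)
Lemma finite_orderable (C : graph -> Prop) : finite_up_to_iso C -> mso2_orderable C.
Proof.
case=> N [L L_iso].
pose b := \max_(i < N) (gn (L i) + 2 ^ gn (L i)).
exists (rank_formula (iota 0 b)) => G CG _.
have [i iso] := L_iso G CG.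
have small : #|{: inc_univ G}| <= b.
  apply: leq_trans (card_inc_univ G) _; rewrite (iso_gn iso).
  exact: (leq_bigmax_cond (F := fun j => gn (L j) + 2 ^ gn (L j))).
exists (fun i => [set c | enum_rank c <= i]).
apply: (linear_order_iff (R' := fun a b => enum_rank a <= enum_rank b)).
  move=> x y; rewrite holds_rank_formula; split=> [rank_xy|le_xy j _].
    move: (rank_xy (enum_rank y)); rewrite !inE mem_iota add0n leqnn /=.
    by apply=> //; rewrite (leq_trans (ltn_ord _)).
  by rewrite !inE => /(leq_trans le_xy).
split=> [x|x y le_xy le_yx|x y z|x y]; first by [].
- by apply/enum_rank_inj/val_inj/eqP; rewrite eqn_leq le_xy le_yx.
- exact: leq_trans.
- by case: (leqP (enum_rank x) (enum_rank y)) => [|/ltnW]; [left|right].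
Qed.

Definition edgeless (m : nat) : graph :=
  @Graph m (fun _ _ => false) (fun _ => erefl) (fun _ _ => erefl).

(* For n > 0 every edgeless graph has n-depth tree-width 0: a star whose
   leaves carry the singleton bags. *)
Lemma edgeless_depth_tw n k m : 0 < n -> depth_tw_le n k (edgeless m).
Proof.
case: n => // n _.
exists m.+1, (fun _ => ord_max), ord_max, (fun t => [set v : 'I_m | val v == val t]).
split=> // [v|]; first by exists (widen_ord (leqnSn m) v); rewrite inE.
split=> // [v t1 t2|t].
  rewrite !inE => /eqP e1 /eqP e2; rewrite (_ : t1 = t2) ?connect0 //.
  by apply: val_inj; rewrite -e1.
apply: leq_trans (_ : #|[set v : 'I_m | val v == val t]| <= 1) _ => //.
by apply/card_le1P => u; rewrite inE => /eqP ut v; rewrite !inE -val_eqE ut.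
Qed.

Lemma edgeless_infinite n k : 0 < n -> ~ finite_up_to_iso (depth_tw_le n k).
Proof.
move=> n_gt0 [N [L L_iso]].
have [i iso] := L_iso _ (edgeless_depth_tw k (\max_(i < N) gn (L i)).+1 n_gt0).
have := leq_bigmax_cond (F := fun j => gn (L j)) (P := xpredT) i isT.
by rewrite -(iso_gn iso) /= ltnn.
Qed.

Theorem proposition4p15 :
  (forall (n k : nat) (C : graph -> Prop),
     (forall G, C G -> depth_tw_le n k G) ->
     (mso2_orderable C <-> finite_up_to_iso C)) /\
  (forall n k : nat, 0 < n -> hered_mso2_unorderable (depth_tw_le n k)).
Proof.
split=> [n k C C_dtw|n k n_gt0].
  by split; [apply: orderable_finite C_dtw | apply: finite_orderable].
split; first exact: edgeless_infinite.
by move=> D D_dtw D_infinite /(orderable_finite D_dtw).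
Qed.
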